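(* (1) $0$ has exactly one infinite OOCF expansion, namely the constant sequence $(2,-1),(2,-1),\dots$; every $\infty$-rational $x\in(0,1)$ has exactly two infinite OOCF expansions and no finite OOCF expansion, and both infinite expansions are eventually the constant sequence $(2,-1)$. (2) Every $1$-rational $x\in(0,1)$ has no infinite OOCF expansion and exactly two finite OOCF expansions; these have the same length and differ only in their last digit. (3) Every irrational $x\in(0,1)$ has a unique infinite OOCF expansion (and no finite one).
   Context: Rationals are written $p/q$ with $p\in\mathbb Z$, $q\in\mathbb N$, $\gcd(p,q)=1$. A rational $p/q$ is a $1$-rational if $p,q$ are both odd and an $\infty$-rational if $p,q$ have different parity. Admissible digits: $D=\{(1,1)\}\cup\{(a,\varepsilon): a\in\mathbb Z,\ a\ge2,\ \varepsilon\in\{-1,1\}\}$. For integers $k\ge1$ put $B(k+1,-1)=\left[\frac{k-1}{k},\frac{2k-1}{2k+1}\right]$ and $B(k,1)=\left[\frac{2k-1}{2k+1},\frac{k}{k+1}\right]$. The OOCF map $T:[0,1]\to[0,1]$ is $T(x)=\frac{kx-(k-1)}{k-(k+1)x}$ for $x\in B(k+1,-1)$, $T(x)=\frac{k-(k+1)x}{kx-(k-1)}$ for $x\in B(k,1)$ ($k\ge1$; the formulas agree at common endpoints), and $T(1)=1$. An infinite OOCF expansion of $x\in[0,1]$ is a sequence $((a_n,\varepsilon_n))_{n\ge1}$ in $D$ with $T^{n-1}(x)\in B(a_n,\varepsilon_n)$ and $T^{n-1}(x)\neq1$ for all $n\ge1$. A finite OOCF expansion of $x$ of length $N\ge1$ is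 a sequence $((a_n,\varepsilon_n))_{n=1}^N$ in $D$ with $T^{n-1}(x)\in B(a_n,\varepsilon_n)$ and $T^{n-1}(x)\ne1$ for $1\le n\le N$, and $T^N(x)=1$. *)

From Stdlib Require Import Reals ZArith List.
Open Scope R_scope.

Definition digit : Type := (Z * Z)%type.

Definition admissible (d : digit) : Prop :=
  d = (1%Z, 1%Z) \/
  ((2 <= fst d)%Z /\ (snd d = (-1)%Z \/ snd d = 1%Z)).

Definition inB (d : digit) (x : R) : Prop :=
  let a := fst d in
  let e := snd d in
  (e = (-1)%Z /\ (1 <= a - 1)%Z /\
     let k := IZR (a - 1) in
     (k - 1) / k <= x <= (2 * k - 1) / (2 * k + 1)) \/
  (e = 1%Z /\ (1 <= a)%Z /\
     let k := IZR a in
     (2 * k - 1) / (2 * k + 1) <= x <= k / (k + 1)).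

(* For x in [0,1), the integer k >= 1 with
   (k-1)/k <= x < k/(k+1) is k = floor(1/(1-x)); then x lies in B(k+1,-1)
   if x <= (2k-1)/(2k+1) and in B(k,1) otherwise (the two formulas agree at
   common endpoints).  T(1) = 1.  (Values outside [0,1] are irrelevant.) *)
Definition oocf_T (x : R) : R :=
  if Rle_dec 1 x then 1 else
  let k := IZR (Int_part (1 / (1 - x))) in
  if Rle_dec x ((2 * k - 1) / (2 * k + 1))
  then (k * x - (k - 1)) / (k - (k + 1) * x)
  else (k - (k + 1) * x) / (k * x - (k - 1)).

Definition oocf_iter (n : nat) (x : R) : R := Nat.iter n oocf_T x.

(* Infinite OOCF expansion: s n is the (n+1)-th digit (0-indexed). *)
Definition inf_expansion (x : R) (s : nat -> digit) : Prop :=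
  forall n : nat,
    admissible (s n) /\ inB (s n) (oocf_iter n x) /\ oocf_iter n x <> 1.

Definition fin_expansion (x : R) (l : list digit) : Prop :=
  (1 <= length l)%nat /\
  (forall i : nat, (i < length l)%nat ->
     admissible (nth i l (1%Z, 1%Z)) /\
     inB (nth i l (1%Z, 1%Z)) (oocf_iter i x) /\ oocf_iter i x <> 1) /\
  oocf_iter (length l) x = 1.

Definition reduced_frac (x : R) (p q : Z) : Prop :=
  (0 < q)%Z /\ Z.gcd p q = 1%Z /\ x = IZR p / IZR q.

Definition one_rational (x : R) : Prop :=
  exists p q : Z, reduced_frac x p q /\ Z.odd p = true /\ Z.odd q = true.

Definition infty_rational (x : R) : Prop :=
  exists p q : Z, reduced_frac x p q /\ Z.odd p <> Z.odd q.

Definition irrational (x : R) : Prop :=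
  ~ exists p q : Z, (0 < q)%Z /\ x = IZR p / IZR q.

From Stdlib Require Import Reals ZArith List Lra Lia.
Open Scope R_scope.

(* The cylinders B(a, eps), listed from left to right, are the intervals
   [i/(i+2), (i+1)/(i+3)], i >= 0, and on each of them T is a Moebius map with integer
   coefficients and determinant +-1 sending the two endpoints to 0 and 1.  Hence a point of
   (0,1) has two admissible digits if T maps it to 0 or 1 (it is then a common endpoint of two
   cylinders) and exactly one otherwise.  T maps irrationals in (0,1) to irrationals in (0,1).
   A rational p/q in (0,1) is mapped to p'/q' with 0 < q' < q, and since the coefficient matrix
   is a permutation matrix mod 2, the unordered pair of parities of numerator and denominator
   is preserved.  So the orbit reaches 0 or 1, and parity decides which: 1-rationals end at 1,
   giving a finite expansion with two choices of last digit, infinity-rationals end at the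
   fixed point 0, whose only digit is (2,-1). *)

Lemma Rdiv_le_iff a b y : 0 < b -> (a / b <= y <-> a <= y * b).
Proof.
  intro Hb. replace a with (a / b * b) at 2 by (field; lra).
  split; intro H; [apply Rmult_le_compat_r | apply Rmult_le_reg_r with b]; lra.
Qed.

Lemma Rle_div_iff a b y : 0 < b -> (y <= a / b <-> y * b <= a).
Proof.
  intro Hb. replace a with (a / b * b) at 2 by (field; lra).
  split; intro H; [apply Rmult_le_compat_r | apply Rmult_le_reg_r with b]; lra.
Qed.

Lemma nth_map_seq {A : Type} (f : nat -> A) n i (d : A) : (i < n)%nat ->
  nth i (map f (seq 0 n)) d = f i.
Proof.
  intro Hi. rewrite (nth_indep _ _ (f 0%nat)) by now rewrite length_map, length_seq.
  now rewrite map_nth, seq_nth.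
Qed.

Lemma map_seq_nth {A : Type} (l : list A) (f : nat -> A) (d : A) :
  (forall i, (i < length l)%nat -> nth i l d = f i) -> l = map f (seq 0 (length l)).
Proof.
  intro H. apply nth_ext with (d := d) (d' := d); [now rewrite length_map, length_seq|].
  intros i Hi. rewrite nth_map_seq; auto.
Qed.

(** * Cylinders *)

Definition signed (d : digit) : Prop := (snd d = -1 \/ snd d = 1)%Z.

(* [B(a, -1)] and [B(a, 1)] are the cylinders of index [2a - 4] and [2a - 1]; the cylinder
   of index [i] is [[i/(i+2), (i+1)/(i+3)]], so consecutive indices are adjacent intervals. *)
Definition cyl_index (d : digit) : Z :=
  if Z.eq_dec (snd d) (-1) then (2 * fst d - 4)%Z else (2 * fst d - 1)%Z.

Definition in_cyl (i : Z) (y : R) : Prop :=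
  (0 <= i)%Z /\ IZR i <= y * (IZR i + 2) /\ y * (IZR i + 3) <= IZR i + 1.

Lemma inB_in_cyl d y : inB d y <-> signed d /\ in_cyl (cyl_index d) y.
Proof.
  destruct d as [a e]; unfold inB, signed, cyl_index, in_cyl; cbn [fst snd].
  destruct (Z.eq_dec e (-1)) as [->|He].
  - rewrite !minus_IZR, mult_IZR; split.
    + intros [[_ [Ha H]] | [? _]]; [|lia]. cbv zeta in H.
      pose proof (IZR_le _ _ Ha) as Ha'. rewrite minus_IZR in Ha'.
      rewrite Rdiv_le_iff, Rle_div_iff in H by lra.
      split; [tauto | split; [lia | lra]].
    + intros [_ [Hi H]]. left. split; [reflexivity | split; [lia|]]. cbv zeta.
      assert (Ha : 2 <= IZR a) by (apply IZR_le; lia).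
      rewrite Rdiv_le_iff, Rle_div_iff by lra; lra.
  - rewrite !minus_IZR, mult_IZR; split.
    + intros [[E _] | [-> [Ha H]]]; [lia|]. cbv zeta in H.
      pose proof (IZR_le _ _ Ha) as Ha'. rewrite Rdiv_le_iff, Rle_div_iff in H by lra.
      split; [tauto | split; [lia | lra]].
    + intros [[E| ->] [Hi H]]; [lia|]. right. split; [reflexivity | split; [lia|]].
      cbv zeta. assert (Ha : 1 <= IZR a) by (apply IZR_le; lia).
      rewrite Rdiv_le_iff, Rle_div_iff by lra; lra.
Qed.

Lemma cyl_index_inj d1 d2 : signed d1 -> signed d2 -> cyl_index d1 = cyl_index d2 -> d1 = d2.
Proof.
  destruct d1 as [a1 e1], d2 as [a2 e2]; unfold signed, cyl_index; cbn [fst snd].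
  intros [-> | ->] [-> | ->]; cbn [fst snd];
    repeat (destruct Z.eq_dec; try lia); intros; f_equal; lia.
Qed.

Lemma cyl_index_surj i : exists d, signed d /\ cyl_index d = i.
Proof.
  unfold signed, cyl_index. pose proof (Z.div2_odd i) as Hi.
  destruct (Z.odd i); cbn [Z.b2z] in Hi.
  - exists (Z.div2 i + 1, 1)%Z; cbn [fst snd]. destruct (Z.eq_dec 1 (-1)); [lia|]. split; [right|]; lia.
  - exists (Z.div2 i + 2, -1)%Z; cbn [fst snd]. destruct (Z.eq_dec (-1) (-1)); [|lia]. split; [left|]; lia.
Qed.

Lemma in_cyl_unit i y : in_cyl i y -> 0 <= y < 1.
Proof. intros [Hi [H1 H2]]. apply IZR_le in Hi. split; nra. Qed.

Lemma in_cyl_adjacent i j y : in_cyl i y -> in_cyl j y -> (i <= j + 1)%Z.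
Proof.
  intros [Hi [H1 _]] [Hj [_ H2]].
  apply IZR_le in Hi, Hj. apply le_IZR. rewrite plus_IZR.
  apply Rmult_le_compat_r with (r := IZR j + 3) in H1; [|lra].
  apply Rmult_le_compat_r with (r := IZR i + 2) in H2; [|lra].
  nra.
Qed.

Lemma in_cyl_two i j y : in_cyl i y -> in_cyl j y -> i <> j ->
  forall k, in_cyl k y -> k = i \/ k = j.
Proof.
  intros Hi Hj Hij k Hk.
  pose proof (in_cyl_adjacent _ _ _ Hi Hj). pose proof (in_cyl_adjacent _ _ _ Hj Hi).
  pose proof (in_cyl_adjacent _ _ _ Hk Hi). pose proof (in_cyl_adjacent _ _ _ Hi Hk).
  pose proof (in_cyl_adjacent _ _ _ Hk Hj). pose proof (in_cyl_adjacent _ _ _ Hj Hk).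
  lia.
Qed.

Definition cyl_endpoint (i : Z) (y : R) : Prop :=
  y * (IZR i + 2) = IZR i \/ y * (IZR i + 3) = IZR i + 1.

Lemma in_cyl_overlap_endpoint i j k y :
  in_cyl i y -> in_cyl j y -> i <> j -> in_cyl k y -> cyl_endpoint k y.
Proof.
  intros Hi Hj Hij Hk. unfold cyl_endpoint.
  pose proof (in_cyl_adjacent _ _ _ Hi Hj). pose proof (in_cyl_adjacent _ _ _ Hj Hi).
  destruct (in_cyl_two i j y Hi Hj Hij k Hk) as [-> | ->];
    destruct Hi as [_ [Hi1 Hi2]], Hj as [_ [Hj1 Hj2]];
    (assert (j = i + 1 \/ i = j + 1)%Z as [-> | ->] by lia);
    rewrite ?plus_IZR in *; lra.
Qed.

Lemma in_cyl_endpoint_neighbour i y : 0 < y -> in_cyl i y -> cyl_endpoint i y ->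
  in_cyl (i - 1) y \/ in_cyl (i + 1) y.
Proof.
  intros Hy [Hi [H1 H2]] [E | E]; [left | right]; unfold in_cyl;
    rewrite ?minus_IZR, ?plus_IZR; apply IZR_le in Hi as Hi'.
  - assert (i <> 0)%Z by (intros ->; cbn in E; lra).
    split; [lia|]. nra.
  - split; [lia|]. nra.
Qed.

Lemma inB_admissible d y : inB d y -> admissible d.
Proof.
  destruct d as [a e]; unfold inB, admissible; cbn [fst snd].
  intros [[-> [Ha _]] | [-> [Ha _]]].
  - right. split; [lia | now left].
  - destruct (Z.eq_dec a 1) as [->|]; [now left|]. right. split; [lia | now right].
Qed.

Lemma inB_endpoint_two_digits d y : 0 < y -> inB d y -> cyl_endpoint (cyl_index d) y ->
  exists d', d' <> d /\ inB d' y /\ forall d'', inB d'' y -> d'' = d \/ d'' = d'.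
Proof.
  intros Hy Hd He. apply inB_in_cyl in Hd as [Sd Cd].
  assert (Hj : exists j, j <> cyl_index d /\ in_cyl j y).
  { destruct (in_cyl_endpoint_neighbour _ _ Hy Cd He) as [Cj | Cj];
      [exists (cyl_index d - 1)%Z | exists (cyl_index d + 1)%Z]; split; auto; lia. }
  destruct Hj as [j [Hij Cj]], (cyl_index_surj j) as [d' [Sd' <-]].
  exists d'. split; [|split].
  - intro E. apply Hij. now rewrite E.
  - now apply inB_in_cyl.
  - intros d'' Hd''. apply inB_in_cyl in Hd'' as [Sd'' Cd''].
    destruct (in_cyl_two _ _ _ Cd Cj (not_eq_sym Hij) _ Cd'') as [E | E];
      [left | right]; now apply cyl_index_inj.
Qed.

Lemma inB_zero d : inB d 0 <-> d = (2%Z, (-1)%Z).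
Proof.
  split.
  - intro H. apply inB_in_cyl in H as [Sd [Hi [H1 _]]].
    apply cyl_index_inj; [assumption | now left |].
    change (cyl_index (2%Z, (-1)%Z)) with 0%Z.
    rewrite Rmult_0_l in H1. apply le_IZR in H1. lia.
  - intros ->. apply inB_in_cyl. split; [now left|].
    change (cyl_index (2%Z, (-1)%Z)) with 0%Z. unfold in_cyl. split; [lia | lra].
Qed.

(** * Integral Moebius maps *)

Record mobius := Mobius { mob_a : Z; mob_b : Z; mob_c : Z; mob_d : Z }.

Definition mob_den (m : mobius) (y : R) : R := IZR (mob_c m) * y + IZR (mob_d m).

Definition mob_num (m : mobius) (y : R) : R := IZR (mob_a m) * y + IZR (mob_b m).

Definition mob_apply (m : mobius) (y : R) : R := mob_num m y / mob_den m y.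

Definition mob_det (m : mobius) : Z := (mob_a m * mob_d m - mob_b m * mob_c m)%Z.

Definition mob_inv (m : mobius) : mobius := Mobius (mob_d m) (- mob_b m) (- mob_c m) (mob_a m).

Lemma mob_apply_frac m p q : IZR q <> 0 -> mob_den m (IZR p / IZR q) <> 0 ->
  IZR (mob_c m * p + mob_d m * q) = IZR q * mob_den m (IZR p / IZR q) /\
  mob_apply m (IZR p / IZR q) = IZR (mob_a m * p + mob_b m * q) / IZR (mob_c m * p + mob_d m * q).
Proof.
  intros Hq Hd. unfold mob_apply, mob_num.
  assert (Eden : IZR (mob_c m * p + mob_d m * q) = IZR q * mob_den m (IZR p / IZR q)).
  { unfold mob_den. rewrite plus_IZR, !mult_IZR. field. exact Hq. }
  split; [exact Eden|]. rewrite Eden, plus_IZR, !mult_IZR.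
  unfold mob_den in *. field. split; [exact Hq|].
  replace (IZR (mob_c m) * IZR p + IZR (mob_d m) * IZR q)
    with (IZR q * (IZR (mob_c m) * (IZR p / IZR q) + IZR (mob_d m))) by (field; exact Hq).
  now apply Rmult_integral_contrapositive_currified.
Qed.

Lemma mob_invK m y : IZR (mob_det m) <> 0 -> mob_den m y <> 0 ->
  mob_den (mob_inv m) (mob_apply m y) <> 0 /\ mob_apply (mob_inv m) (mob_apply m y) = y.
Proof.
  intros Hdet Hd. unfold mob_apply, mob_num, mob_inv, mob_det in *; cbn.
  assert (E : mob_den (Mobius (mob_d m) (- mob_b m) (- mob_c m) (mob_a m))
                ((IZR (mob_a m) * y + IZR (mob_b m)) / mob_den m y)
              = IZR (mob_a m * mob_d m - mob_b m * mob_c m) / mob_den m y).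
  { unfold mob_den in *; cbn. rewrite minus_IZR, !mult_IZR, !opp_IZR. field. exact Hd. }
  rewrite E. split.
  - unfold Rdiv. apply Rmult_integral_contrapositive_currified; [exact Hdet|].
    now apply Rinv_neq_0_compat.
  - rewrite minus_IZR, !mult_IZR, !opp_IZR in *. unfold mob_den in *. field.
    split; assumption.
Qed.

Definition rational (y : R) : Prop := exists p q : Z, IZR q <> 0 /\ y = IZR p / IZR q.

Lemma rational_IZR z : rational (IZR z).
Proof. exists z, 1%Z. split; [exact R1_neq_R0 | field]. Qed.

Lemma irrational_iff y : irrational y <-> ~ rational y.
Proof.
  unfold irrational, rational. split.
  - intros Hir [p [q [Hq E]]]. apply Hir.
    destruct (Z_lt_le_dec 0 q) as [Hpos | Hneg].
    + now exists p, q.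
    + exists (- p)%Z, (- q)%Z. split.
      * assert (q <> 0)%Z by (intros ->; now apply Hq). lia.
      * rewrite E, !opp_IZR. field. exact Hq.
  - intros Hnr [p [q [Hq E]]]. apply Hnr. exists p, q. split; [|exact E].
    apply not_0_IZR. lia.
Qed.

Lemma rational_mob_apply m y : rational y -> mob_den m y <> 0 -> rational (mob_apply m y).
Proof.
  intros [p [q [Hq ->]]] Hd. destruct (mob_apply_frac m p q Hq Hd) as [Eden Eval].
  eexists _, _. split; [|exact Eval]. rewrite Eden.
  now apply Rmult_integral_contrapositive_currified.
Qed.

Lemma rational_of_mob_apply m y : IZR (mob_det m) <> 0 -> mob_den m y <> 0 ->
  rational (mob_apply m y) -> rational y.
Proof.
  intros Hdet Hd Hr. destruct (mob_invK m y Hdet Hd) as [Hd' <-].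
  now apply rational_mob_apply.
Qed.

(** * The branches of [T] *)

(* The branch of [T] on [B(a, eps)]: the formulas of [oocf_T] with [k = a - 1] for
   [eps = -1] and [k = a] for [eps = 1]. *)
Definition branch (d : digit) : mobius :=
  let a := fst d in
  if Z.eq_dec (snd d) (-1) then Mobius (a - 1) (2 - a) (- a) (a - 1)
  else Mobius (- (a + 1)) a a (1 - a).

Lemma branch_det d : IZR (mob_det (branch d)) <> 0.
Proof.
  apply not_0_IZR.
  enough (mob_det (branch d) = 1 \/ mob_det (branch d) = -1)%Z by lia.
  unfold branch, mob_det. destruct Z.eq_dec; cbn [mob_a mob_b mob_c mob_d]; [left | right]; ring.
Qed.

(* A symmetric function of the parities of [p] and [q]: [(true, false)] for 1-rationals,
   [(false, true)] for infinity-rationals. *)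
Definition parity_class (p q : Z) : bool * bool :=
  (Z.odd p && Z.odd q, xorb (Z.odd p) (Z.odd q))%bool.

Lemma branch_parity d p q :
  parity_class (mob_a (branch d) * p + mob_b (branch d) * q)
               (mob_c (branch d) * p + mob_d (branch d) * q) = parity_class p q.
Proof.
  unfold branch, parity_class. destruct Z.eq_dec; cbn [mob_a mob_b mob_c mob_d];
    repeat rewrite ?Z.odd_add, ?Z.odd_mul, ?Z.odd_sub, ?Z.odd_opp;
    destruct (Z.odd (fst d)), (Z.odd p), (Z.odd q); reflexivity.
Qed.

(* The numerator and the gap [den - num] are, up to a positive factor and in some order, the
   two defining inequalities of the cylinder; so the branch maps its cylinder into [0, 1] and
   exactly its endpoints to 0 and 1. *)
Lemma branch_num_den d y : signed d ->
  (2 * mob_num (branch d) y = y * (IZR (cyl_index d) + 2) - IZR (cyl_index d) /\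
   mob_den (branch d) y - mob_num (branch d) y
     = IZR (cyl_index d) + 1 - y * (IZR (cyl_index d) + 3)) \/
  (2 * mob_num (branch d) y = IZR (cyl_index d) + 1 - y * (IZR (cyl_index d) + 3) /\
   mob_den (branch d) y - mob_num (branch d) y
     = y * (IZR (cyl_index d) + 2) - IZR (cyl_index d)).
Proof.
  destruct d as [a e]; unfold signed, branch, cyl_index, mob_num, mob_den; cbn [fst snd].
  intros [-> | ->]; [left | right];
    destruct Z.eq_dec; try lia; cbn [mob_a mob_b mob_c mob_d];
    rewrite ?minus_IZR, ?opp_IZR, ?plus_IZR, ?mult_IZR; split; ring.
Qed.

Lemma branch_den_bounds d y : inB d y ->
  0 < mob_den (branch d) y /\ (0 < y -> mob_den (branch d) y < 1).
Proof.
  intro H. apply inB_in_cyl in H as [Sd Hc].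
  pose proof (in_cyl_unit _ _ Hc) as Hy. destruct Hc as [_ [H1 H2]].
  destruct (branch_num_den d y Sd) as [[E1 E2] | [E1 E2]]; split; intros; lra.
Qed.

Lemma branch_unit d y : inB d y ->
  (0 <= mob_apply (branch d) y <= 1) /\
  (mob_apply (branch d) y = 0 \/ mob_apply (branch d) y = 1 <-> cyl_endpoint (cyl_index d) y).
Proof.
  intro H. destruct (branch_den_bounds d y H) as [HD _].
  apply inB_in_cyl in H as [Sd [_ [H1 H2]]]. unfold mob_apply, cyl_endpoint.
  pose proof (branch_num_den d y Sd) as Hnd.
  set (N := mob_num (branch d) y) in *. set (D := mob_den (branch d) y) in *.
  assert (Hval : N / D = 0 <-> N = 0) by (split; intro E;
    [apply (Rmult_eq_compat_r D) in E; field_simplify in E | rewrite E; field]; lra).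
  assert (Hval1 : N / D = 1 <-> N = D) by (split; intro E;
    [apply (Rmult_eq_compat_r D) in E; field_simplify in E | rewrite E; field]; lra).
  rewrite Hval, Hval1, Rdiv_le_iff, Rle_div_iff by lra.
  destruct Hnd as [[E1 E2] | [E1 E2]]; (split; [lra|]);
    split; intros [E | E]; [left | right | left | right | right | left | right | left]; lra.
Qed.

Definition T_digit (y : R) : digit :=
  let k := Int_part (1 / (1 - y)) in
  if Rle_dec y ((2 * IZR k - 1) / (2 * IZR k + 1)) then (k + 1, -1)%Z else (k, 1)%Z.

Lemma T_digit_spec y : 0 <= y < 1 ->
  inB (T_digit y) y /\ oocf_T y = mob_apply (branch (T_digit y)) y.
Proof.
  intro Hy. unfold oocf_T, T_digit, inB, branch, mob_apply, mob_num, mob_den.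
  destruct (Rle_dec 1 y) as [C|_]; [lra|].
  set (K := Int_part (1 / (1 - y))).
  destruct (base_Int_part (1 / (1 - y))) as [B1 B2]. fold K in B1, B2.
  assert (Hinv : 1 / (1 - y) * (1 - y) = 1) by (field; lra).
  assert (HK : (1 <= K)%Z).
  { enough (0 < K)%Z by lia. apply lt_IZR.
    enough (1 <= 1 / (1 - y)) by lra. apply Rle_div_iff; lra. }
  assert (Hk : 1 <= IZR K) by (apply IZR_le; exact HK).
  set (k := IZR K) in *.
  assert (Lo : k * (1 - y) <= 1) by nra.
  assert (Hi : (k + 1) * (1 - y) > 1) by nra.
  destruct (Rle_dec y ((2 * k - 1) / (2 * k + 1))) as [L|L]; cbn [fst snd].
  - replace (K + 1 - 1)%Z with K by ring.
    destruct (Z.eq_dec (-1) (-1)) as [_|C]; [|lia]. split.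
    + left. split; [reflexivity | split; [lia|]]. cbv zeta. fold k.
      split; [apply Rdiv_le_iff; lra | exact L].
    + cbn [mob_a mob_b mob_c mob_d]. rewrite minus_IZR, opp_IZR, plus_IZR. fold k.
      unfold Rdiv. f_equal; [ring | f_equal; ring].
  - destruct (Z.eq_dec 1 (-1)) as [C|_]; [lia|]. split.
    + right. split; [reflexivity | split; [lia|]]. cbv zeta. fold k.
      split; [lra | apply Rle_div_iff; lra].
    + cbn [mob_a mob_b mob_c mob_d]. rewrite minus_IZR, opp_IZR, plus_IZR. fold k.
      unfold Rdiv. f_equal; [ring | f_equal; ring].
Qed.

Lemma oocf_T_unit y : 0 <= y < 1 -> 0 <= oocf_T y <= 1.
Proof.
  intro Hy. destruct (T_digit_spec y Hy) as [Hd ->]. apply (branch_unit _ _ Hd).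
Qed.

Lemma oocf_T_0 : oocf_T 0 = 0.
Proof.
  destruct (T_digit_spec 0) as [Hd ->]; [lra|].
  apply inB_zero in Hd. rewrite Hd. unfold mob_apply, mob_num, mob_den. cbn. field.
Qed.

Lemma inB_unique y d1 d2 : 0 <= y < 1 -> 0 < oocf_T y < 1 -> inB d1 y -> inB d2 y -> d1 = d2.
Proof.
  intros Hy HT H1 H2. destruct (T_digit_spec y Hy) as [Ht ET].
  apply inB_in_cyl in H1 as [S1 C1], H2 as [S2 C2].
  destruct (Z.eq_dec (cyl_index d1) (cyl_index d2)) as [E | NE]; [now apply cyl_index_inj|].
  exfalso. apply inB_in_cyl in Ht as Ht'. destruct Ht' as [_ Ct].
  pose proof (in_cyl_overlap_endpoint _ _ _ _ C1 C2 NE Ct) as Hend.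
  apply (branch_unit _ _ Ht) in Hend. rewrite <- ET in Hend. lra.
Qed.

Lemma two_digits_of_T_0_or_1 y : 0 < y < 1 -> oocf_T y = 0 \/ oocf_T y = 1 ->
  exists d', d' <> T_digit y /\ inB d' y /\ forall d, inB d y -> d = T_digit y \/ d = d'.
Proof.
  intros Hy HT. destruct (T_digit_spec y) as [Ht ET]; [lra|].
  apply inB_endpoint_two_digits; [lra | exact Ht|].
  apply (branch_unit _ _ Ht). now rewrite <- ET.
Qed.

Lemma oocf_iter_succ n y : oocf_iter (S n) y = oocf_T (oocf_iter n y).
Proof. reflexivity. Qed.

Lemma oocf_iter_succ_r n y : oocf_iter (S n) y = oocf_iter n (oocf_T y).
Proof. apply Nat.iter_succ_r. Qed.

Lemma oocf_iter_fixed m n x c : oocf_iter m x = c -> oocf_T c = c -> (m <= n)%nat ->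
  oocf_iter n x = c.
Proof.
  intros Hm Hc Hmn. induction Hmn as [|n _ IH]; [exact Hm|].
  now rewrite oocf_iter_succ, IH.
Qed.

(** * Orbits of rational and irrational points *)

Lemma T_rational_step y p q : 0 < y < 1 -> (0 < q)%Z -> y = IZR p / IZR q ->
  exists p' q', (0 < q' < q)%Z /\ oocf_T y = IZR p' / IZR q' /\
    parity_class p' q' = parity_class p q.
Proof.
  intros Hy Hq Ey. destruct (T_digit_spec y) as [Hd ->]; [lra|].
  destruct (branch_den_bounds _ _ Hd) as [D0 D1]. specialize (D1 (proj1 Hy)).
  set (m := branch (T_digit y)) in *. subst y.
  pose proof (IZR_lt _ _ Hq) as HQ.
  destruct (mob_apply_frac m p q) as [Eden Eval]; [lra | lra |].
  do 2 eexists. split; [|split; [exact Eval | apply branch_parity]].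
  split; apply lt_IZR; rewrite Eden; nra.
Qed.

Lemma rational_orbit_reaches_0_or_1 q : (0 < q)%Z -> forall p y,
  y = IZR p / IZR q -> 0 < y < 1 ->
  exists m p' q', (forall j, (j <= m)%nat -> 0 < oocf_iter j y < 1) /\ (0 < q')%Z /\
    oocf_iter (S m) y = IZR p' / IZR q' /\
    (oocf_iter (S m) y = 0 \/ oocf_iter (S m) y = 1) /\
    parity_class p' q' = parity_class p q.
Proof.
  intro Hq. assert (Hq0 : (0 <= q)%Z) by lia. revert Hq. pattern q.
  apply Z_lt_induction; [clear q Hq0 | exact Hq0].
  intros q IH Hq p y Ey Hy.
  destruct (T_rational_step y p q Hy Hq Ey) as [p' [q' [Hq' [ET Hpar]]]].
  pose proof (oocf_T_unit y ltac:(lra)) as HT.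
  destruct (Req_dec (oocf_T y) 0) as [E0 | N0];
    [|destruct (Req_dec (oocf_T y) 1) as [E1 | N1]].
  1, 2: exists 0%nat, p', q'; change (oocf_iter 1 y) with (oocf_T y); split;
    [intros j Hj; replace j with 0%nat by lia; exact Hy | split; [lia | tauto]].
  assert (HT01 : 0 < oocf_T y < 1)
    by (split; apply Rnot_le_lt; intro C; [apply N0 | apply N1]; lra).
  destruct (IH q' ltac:(lia) ltac:(lia) p' (oocf_T y) ET HT01)
    as [m [p'' [q'' [Horb [Hq'' [Ev [Hend Hpar']]]]]]].
  exists (S m), p'', q''. rewrite oocf_iter_succ_r, Hpar', Hpar.
  split; [|tauto].
  intros [|j] Hj; [exact Hy|]. rewrite oocf_iter_succ_r. apply Horb. lia.
Qed.

Lemma parity_class_0 p q : (0 < q)%Z -> IZR p / IZR q = 0 -> parity_class p q = (false, Z.odd q).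
Proof.
  intros Hq E. apply IZR_lt in Hq.
  assert (p = 0%Z) as -> by (apply eq_IZR; apply (Rmult_eq_compat_r (IZR q)) in E;
                            field_simplify in E; lra).
  reflexivity.
Qed.

Lemma parity_class_1 p q : (0 < q)%Z -> IZR p / IZR q = 1 -> parity_class p q = (Z.odd q, false).
Proof.
  intros Hq E. apply IZR_lt in Hq.
  assert (p = q) as -> by (apply eq_IZR; apply (Rmult_eq_compat_r (IZR q)) in E;
                          field_simplify in E; lra).
  unfold parity_class. now destruct (Z.odd q).
Qed.

Lemma one_rational_orbit x : 0 < x < 1 -> one_rational x ->
  exists m, (forall j, (j <= m)%nat -> 0 < oocf_iter j x < 1) /\ oocf_iter (S m) x = 1.
Proof.
  intros Hx [p [q [[Hq [_ Ex]] [Hp Hq2]]]].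
  destruct (rational_orbit_reaches_0_or_1 q Hq p x Ex Hx)
    as [m [p' [q' [Horb [Hq' [Ev [[E | E] Hpar]]]]]]]; exists m; split; auto.
  rewrite E in Ev. symmetry in Ev. apply parity_class_0 in Ev; [|exact Hq'].
  rewrite Ev in Hpar. unfold parity_class in Hpar. rewrite Hp, Hq2 in Hpar. discriminate.
Qed.

Lemma infty_rational_orbit x : 0 < x < 1 -> infty_rational x ->
  exists m, (forall j, (j <= m)%nat -> 0 < oocf_iter j x < 1) /\ oocf_iter (S m) x = 0.
Proof.
  intros Hx [p [q [[Hq [_ Ex]] Hpq]]].
  destruct (rational_orbit_reaches_0_or_1 q Hq p x Ex Hx)
    as [m [p' [q' [Horb [Hq' [Ev [[E | E] Hpar]]]]]]]; exists m; split; auto.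
  rewrite E in Ev. symmetry in Ev. apply parity_class_1 in Ev; [|exact Hq'].
  rewrite Ev in Hpar. unfold parity_class in Hpar. injection Hpar as _ Hodd.
  now destruct (Z.odd p), (Z.odd q).
Qed.

Lemma irrational_T y : 0 < y < 1 -> irrational y -> 0 < oocf_T y < 1 /\ irrational (oocf_T y).
Proof.
  intros Hy Hir. destruct (T_digit_spec y) as [Hd ET]; [lra|].
  destruct (branch_den_bounds _ _ Hd) as [D0 _].
  assert (Hnr : ~ rational (oocf_T y)).
  { rewrite ET. intro Hr. apply irrational_iff in Hir. apply Hir.
    apply rational_of_mob_apply with (m := branch (T_digit y)); auto using branch_det.
    lra. }
  pose proof (oocf_T_unit y ltac:(lra)) as HT.
  split; [|now apply irrational_iff].
  split; apply Rnot_le_lt; intro C; apply Hnr;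
    [replace (oocf_T y) with 0 by lra | replace (oocf_T y) with 1 by lra]; apply rational_IZR.
Qed.

(** * Expansions *)

(* [inf_expansion x s] unfolds to [forall n, digit_at x n (s n)]; [fin_expansion] imposes
   the same condition on each entry of the list. *)
Definition digit_at (x : R) (n : nat) (d : digit) : Prop :=
  admissible d /\ inB d (oocf_iter n x) /\ oocf_iter n x <> 1.

Lemma digit_at_T_digit x n : 0 <= oocf_iter n x < 1 -> digit_at x n (T_digit (oocf_iter n x)).
Proof.
  intro Hy. destruct (T_digit_spec _ Hy) as [Hd _].
  split; [exact (inB_admissible _ _ Hd) | split; [exact Hd | lra]].
Qed.

Lemma digit_at_unique x n d : 0 < oocf_iter n x < 1 -> 0 < oocf_iter (S n) x < 1 ->
  digit_at x n d -> d = T_digit (oocf_iter n x).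
Proof.
  intros Hy HT [_ [Hd _]].
  assert (Hy' : 0 <= oocf_iter n x < 1) by lra.
  apply (inB_unique (oocf_iter n x)); [exact Hy' | exact HT | exact Hd | apply T_digit_spec, Hy'].
Qed.

Lemma digit_at_two x n : 0 < oocf_iter n x < 1 ->
  oocf_iter (S n) x = 0 \/ oocf_iter (S n) x = 1 ->
  exists d', d' <> T_digit (oocf_iter n x) /\ digit_at x n d' /\
    forall d, digit_at x n d -> d = T_digit (oocf_iter n x) \/ d = d'.
Proof.
  intros Hy HT. destruct (two_digits_of_T_0_or_1 _ Hy HT) as [d' [Hne [Hd' Hall]]].
  exists d'. split; [exact Hne|]. split.
  - split; [exact (inB_admissible _ _ Hd') | split; [exact Hd' | lra]].
  - intros d [_ [Hd _]]. now apply Hall.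
Qed.

Lemma digit_at_0 x n d : oocf_iter n x = 0 -> digit_at x n d <-> d = (2%Z, (-1)%Z).
Proof.
  intro H0. unfold digit_at. rewrite H0, inB_zero. split; [tauto|].
  intros ->. split; [|split; [reflexivity | lra]]. right. cbn. split; [lia | now left].
Qed.


Lemma fin_expansion_map_seq x (s : nat -> digit) m :
  (forall i, (i <= m)%nat -> digit_at x i (s i)) -> oocf_iter (S m) x = 1 ->
  fin_expansion x (map s (seq 0 (S m))).
Proof.
  intros Hs H1. unfold fin_expansion. rewrite length_map, length_seq. split; [lia|]. split; [|exact H1].
  intros i Hi. rewrite nth_map_seq by exact Hi. apply Hs. lia.
Qed.

Lemma zero_expansion : inf_expansion 0 (fun _ => (2%Z, (-1)%Z)) /\
  forall s, inf_expansion 0 s -> forall n, s n = (2%Z, (-1)%Z).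
Proof.
  assert (H0 : forall n, oocf_iter n 0 = 0)
    by (intro n; apply (oocf_iter_fixed 0); [reflexivity | exact oocf_T_0 | lia]).
  split.
  - intro n. now apply (digit_at_0 0 n).
  - intros s Hs n. apply (digit_at_0 0 n); [apply H0 | apply Hs].
Qed.

Lemma infty_rational_expansions x : 0 < x < 1 -> infty_rational x ->
  (forall l, ~ fin_expansion x l) /\
  exists s1 s2 : nat -> digit,
    inf_expansion x s1 /\ inf_expansion x s2 /\
    (exists n, s1 n <> s2 n) /\
    (forall s, inf_expansion x s -> (forall n, s n = s1 n) \/ (forall n, s n = s2 n)) /\
    (exists N : nat, forall n, (N <= n)%nat -> s1 n = (2%Z, (-1)%Z) /\ s2 n = (2%Z, (-1)%Z)).
Proof.
  intros Hx Hr. destruct (infty_rational_orbit x Hx Hr) as [m [Horb H0]].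
  assert (Hzero : forall n, (S m <= n)%nat -> oocf_iter n x = 0)
    by (intros n Hn; exact (oocf_iter_fixed _ _ _ _ H0 oocf_T_0 Hn)).
  assert (Hunit : forall n, 0 <= oocf_iter n x < 1).
  { intro n. destruct (le_lt_dec n m) as [Hn | Hn];
      [specialize (Horb n Hn) | rewrite (Hzero n Hn)]; lra. }
  destruct (digit_at_two x m (Horb m (le_n m)) (or_introl H0)) as [d' [Hne [Hd' Hall]]].
  set (s1 := fun n => T_digit (oocf_iter n x)).
  set (s2 := fun n => if Nat.eqb n m then d' else s1 n).
  assert (Hs1 : forall n, digit_at x n (s1 n)) by (intro n; apply digit_at_T_digit, Hunit).
  assert (Hlate : forall n d, (S m <= n)%nat -> digit_at x n d -> d = (2%Z, (-1)%Z))
    by (intros n d Hn; apply digit_at_0, Hzero, Hn).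
  split; [intros l [_ [_ C]]; specialize (Hunit (length l)); lra|].
  exists s1, s2. split; [exact Hs1|]. split; [|split; [|split]].
  - intro n. change (digit_at x n (s2 n)).
    unfold s2. destruct (Nat.eqb_spec n m) as [-> | _]; auto.
  - exists m. unfold s2. rewrite Nat.eqb_refl. auto.
  - intros s Hs.
    assert (Hother : forall n, n <> m -> s n = s1 n).
    { intros n Hn. destruct (le_lt_dec n m) as [Hle | Hlt].
      - apply digit_at_unique; [apply Horb; lia | apply Horb; lia | apply Hs].
      - rewrite (Hlate n (s n)) by (lia || apply Hs). symmetry. apply (Hlate n); [lia | apply Hs1]. }
    destruct (Hall _ (Hs m)) as [E | E]; [left | right]; intro n;
      destruct (Nat.eq_dec n m) as [-> | Hn]; unfold s2.
    + exact E.
    + now apply Hother.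
    + now rewrite Nat.eqb_refl.
    + rewrite (proj2 (Nat.eqb_neq n m) Hn). now apply Hother.
  - exists (S m). intros n Hn. unfold s2.
    rewrite (proj2 (Nat.eqb_neq n m)) by lia. split; apply (Hlate n); auto.
Qed.

Lemma one_rational_expansions x : 0 < x < 1 -> one_rational x ->
  (forall s, ~ inf_expansion x s) /\
  exists l1 l2 : list digit,
    fin_expansion x l1 /\ fin_expansion x l2 /\ l1 <> l2 /\
    (forall l, fin_expansion x l -> l = l1 \/ l = l2) /\
    length l1 = length l2 /\ removelast l1 = removelast l2.
Proof.
  intros Hx Hr. destruct (one_rational_orbit x Hx Hr) as [m [Horb H1]].
  destruct (digit_at_two x m (Horb m (le_n m)) (or_intror H1)) as [d' [Hne [Hd' Hall]]].
  set (s1 := fun n => T_digit (oocf_iter n x)).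
  set (s2 := fun n => if Nat.eqb n m then d' else s1 n).
  assert (Hs1 : forall n, (n <= m)%nat -> digit_at x n (s1 n))
    by (intros n Hn; apply digit_at_T_digit; specialize (Horb n Hn); lra).
  assert (Hs2 : forall n, (n <= m)%nat -> digit_at x n (s2 n))
    by (intros n Hn; unfold s2; destruct (Nat.eqb_spec n m) as [-> | _]; auto).
  split; [intros s Hs; destruct (Hs (S m)) as [_ [_ C]]; exact (C H1)|].
  exists (map s1 (seq 0 (S m))), (map s2 (seq 0 (S m))).
  split; [now apply fin_expansion_map_seq|]. split; [now apply fin_expansion_map_seq|].
  split; [|split; [|split]].
  - intro E. apply (f_equal (fun l => nth m l (1%Z, 1%Z))) in E.
    rewrite !nth_map_seq in E by lia. unfold s2 in E. rewrite Nat.eqb_refl in E. auto.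
  - intros l [Hlen [Hl H1']].
    assert (Hlen' : length l = S m).
    { destruct (le_lt_dec (length l) m) as [Hle | Hlt]; [specialize (Horb _ Hle); lra|].
      destruct (Nat.eq_dec (length l) (S m)) as [E | NE]; [exact E|].
      destruct (Hl (S m)) as [_ [_ C]]; [lia | contradiction]. }
    assert (Huniq : forall i, (i < m)%nat -> nth i l (1%Z, 1%Z) = s1 i)
      by (intros i Hi; apply digit_at_unique; [apply Horb | apply Horb | apply Hl]; lia).
    destruct (Hall (nth m l (1%Z, 1%Z))) as [E | E]; [apply Hl; lia | left | right];
      rewrite <- Hlen'; apply (@map_seq_nth digit _ _ (1%Z, 1%Z)); rewrite Hlen'; intros i Hi;
      unfold s2; destruct (Nat.eqb_spec i m) as [-> | Him]; auto; apply Huniq; lia.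
  - now rewrite !length_map.
  - rewrite seq_S, !map_app. cbn [map]. rewrite !removelast_last. apply map_ext_in.
    intros i Hi. apply in_seq in Hi. unfold s2.
    destruct (Nat.eqb_spec i m); [lia | reflexivity].
Qed.

Lemma irrational_expansion x : 0 < x < 1 -> irrational x ->
  (forall l, ~ fin_expansion x l) /\
  exists s : nat -> digit, inf_expansion x s /\ forall t, inf_expansion x t -> forall n, t n = s n.
Proof.
  intros Hx Hir.
  assert (Horb : forall n, 0 < oocf_iter n x < 1 /\ irrational (oocf_iter n x)).
  { induction n as [|n [Hn Hirn]]; [now split|]. now apply irrational_T. }
  split; [intros l [_ [_ C]]; destruct (Horb (length l)); lra|].
  exists (fun n => T_digit (oocf_iter n x)). split.
  - intro n. apply digit_at_T_digit. destruct (Horb n). lra.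
  - intros t Ht n. apply digit_at_unique; [apply Horb | apply Horb | apply Ht].
Qed.

Theorem proposition2p1 :
  (inf_expansion 0 (fun _ => (2%Z, (-1)%Z)) /\
   forall s, inf_expansion 0 s -> forall n, s n = (2%Z, (-1)%Z)) /\
  (forall x : R, 0 < x < 1 -> infty_rational x ->
     (forall l, ~ fin_expansion x l) /\
     exists s1 s2 : nat -> digit,
       inf_expansion x s1 /\ inf_expansion x s2 /\
       (exists n, s1 n <> s2 n) /\
       (forall s, inf_expansion x s ->
          (forall n, s n = s1 n) \/ (forall n, s n = s2 n)) /\
       (exists N : nat, forall n, (N <= n)%nat ->
          s1 n = (2%Z, (-1)%Z) /\ s2 n = (2%Z, (-1)%Z))) /\
  (forall x : R, 0 < x < 1 -> one_rational x ->
     (forall s, ~ inf_expansion x s) /\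
     exists l1 l2 : list digit,
       fin_expansion x l1 /\ fin_expansion x l2 /\ l1 <> l2 /\
       (forall l, fin_expansion x l -> l = l1 \/ l = l2) /\
       length l1 = length l2 /\ removelast l1 = removelast l2) /\
  (forall x : R, 0 < x < 1 -> irrational x ->
     (forall l, ~ fin_expansion x l) /\
     exists s : nat -> digit, inf_expansion x s /\
       forall t, inf_expansion x t -> forall n, t n = s n).
Proof.
  split; [exact zero_expansion|].
  split; [exact infty_rational_expansions|].
  split; [exact one_rational_expansions | exact irrational_expansion].
Qed.
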